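(* Let $D=(D_1,D_2)$ with $D_1\in\mathcal{U}(n,s^p)$ (qualitative factors) and $D_2\in\mathcal{U}(n,2^q)$ (quantitative factors). Then $\mathrm{QQD}^2(D)\ge LB_2$, where $$LB_2=-\left(\frac{5s+1}{4s}\right)^p\left(\frac43\right)^q+\left(\frac{5s+1}{4s}\right)^p\left(\frac{11}{8}\right)^q+\frac{1}{n^2}\left(\frac54\right)^{p+q}\sum_{k=1}^{p+q}\left(\frac15\right)^k\sum_{k_1+k_2=k}\binom{p}{k_1}\binom{q}{k_2}r_{n,k_1,k_2,s,2}\left(1-\frac{r_{n,k_1,k_2,s,2}}{s^{k_1}2^{k_2}}\right),$$ with $r_{n,k_1,k_2,s,2}$ the remainder of $n$ modulo $s^{k_1}2^{k_2}$ (the inner sum over nonnegative integers $k_1,k_2$, with $\binom{p}{k_1}=0$ for $k_1>p$ and $\binom{q}{k_2}=0$ for $k_2>q$).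
   Context: $\mathcal{U}(n,s^p2^q)$: $n\times(p+q)$ matrices whose first $p$ columns each take every value in $\{0,\dots,s-1\}$ equally often (qualitative factors) and whose last $q$ columns each take every value in $\{0,1\}$ equally often (quantitative factors). For quantitative columns a level $x\in\{0,1\}$ is transformed to $(2x+1)/4\in[0,1]$. Let $\chi=\prod_k\chi_k$, $\chi_k=\{0,\dots,s-1\}$ for $k\le p$, $\chi_k=[0,1]$ for $k>p$, and $F$ the uniform distribution on $\chi$. Kernel: $\mathcal{K}(t,z)=\prod_k\mathcal{K}_k(t_k,z_k)$ with $\mathcal{K}_k=(3/2)^{\delta_{t_kz_k}}(5/4)^{1-\delta_{t_kz_k}}$ for $k\le p$ ($\delta$ the Kronecker delta) and $\mathcal{K}_k=\frac32-|t_k-z_k|+|t_k-z_k|^2$ for $k>p$. For $D$ with (transformed) rows $x_1,\dots,x_n$, the squared qualitative-quantitative discrepancy is $\mathrm{QQD}^2(D)=\int_{\chi^2}\mathcal{K}\,dF\,dF-\frac2n\sum_i\int_\chi\mathcal{K}(t,x_i)dF(t)+\frac1{n^2}\sum_{i,j}\mathcal{K}(x_i,x_j)$. *)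

From HB Require Import structures.
From mathcomp Require Import all_boot all_order all_algebra.
From mathcomp Require Import all_classical all_reals all_analysis.
Set Implicit Arguments. Unset Strict Implicit. Unset Printing Implicit Defensive.
Import Order.TTheory GRing.Theory Num.Theory.
Import numFieldNormedType.Exports.
Local Open Scope classical_set_scope.
Local Open Scope ring_scope.

Definition balanced_qual (n p s : nat) (D1 : 'M['I_s]_(n, p)) : Prop :=
  forall (j : 'I_p) (a b : 'I_s),
    #|[set i : 'I_n | D1 i j == a]| = #|[set i : 'I_n | D1 i j == b]|.

Definition balanced_quant (n q : nat) (D2 : 'M['I_2]_(n, q)) : Prop :=
  forall (j : 'I_q) (a b : 'I_2),
    #|[set i : 'I_n | D2 i j == a]| = #|[set i : 'I_n | D2 i j == b]|.

Section QQD.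
Variable R : realType.

Definition quant_level (x : 'I_2) : R := ((2 * (x : nat) + 1)%:R) / 4.

Definition Kqual (s : nat) (t z : 'I_s) : R :=
  if t == z then 3 / 2 else 5 / 4.
Definition Kquant (t z : R) : R := 3 / 2 - `|t - z| + `|t - z| ^+ 2.

(* A point of chi = {0..s-1}^p x [0,1]^q: qualitative coordinates as a finite
   function, quantitative coordinates as a sequence (coordinate k = nth 0 v k). *)
Definition Kfull (p q s : nat) (t1 : {ffun 'I_p -> 'I_s}) (t2 : seq R)
    (z1 : {ffun 'I_p -> 'I_s}) (z2 : seq R) : R :=
  (\prod_(k < p) Kqual (t1 k) (z1 k)) *
  (\prod_(k < q) Kquant (nth 0 t2 k) (nth 0 z2 k)).

(* Integral over the unit cube [0,1]^q w.r.t. Lebesgue measure, written as an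
   iterated integral (the integrands used below are continuous). *)
Fixpoint cube_int (q : nat) (f : seq R -> R) : R :=
  match q with
  | 0 => f [::]
  | q'.+1 => \int[lebesgue_measure]_(x in `[0%R, 1%R]) cube_int q' (fun v => f (x :: v))
  end.

(* Integral over chi w.r.t. the uniform distribution F
   (uniform on {0..s-1} for qualitative factors, uniform on [0,1] otherwise). *)
Definition chi_int (p q s : nat) (g : {ffun 'I_p -> 'I_s} -> seq R -> R) : R :=
  (s%:R ^+ p)^-1 * \sum_(t1 : {ffun 'I_p -> 'I_s}) cube_int q (fun t2 => g t1 t2).

Definition row_qual (n p s : nat) (D1 : 'M['I_s]_(n, p)) (i : 'I_n)
  : {ffun 'I_p -> 'I_s} := [ffun k => D1 i k].
Definition row_quant (n q : nat) (D2 : 'M['I_2]_(n, q)) (i : 'I_n) : seq R :=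
  [seq quant_level (D2 i k) | k <- enum 'I_q].

Definition QQD2 (n p q s : nat) (D1 : 'M['I_s]_(n, p)) (D2 : 'M['I_2]_(n, q)) : R :=
  @chi_int p q s (fun t1 t2 => @chi_int p q s (fun z1 z2 => @Kfull p q s t1 t2 z1 z2))
  - 2 / n%:R * \sum_(i < n)
        @chi_int p q s (fun t1 t2 => @Kfull p q s t1 t2 (row_qual D1 i) (row_quant D2 i))
  + 1 / (n%:R ^+ 2) * \sum_(i < n) \sum_(j < n)
        @Kfull p q s (row_qual D1 i) (row_quant D2 i) (row_qual D1 j) (row_quant D2 j).

Definition rem_r (n k1 k2 s : nat) : nat := n %% (s ^ k1 * 2 ^ k2).

Definition LB2 (n p q s : nat) : R :=
  - ((5 * s + 1)%:R / (4 * s)%:R) ^+ p * (4 / 3) ^+ q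
  + ((5 * s + 1)%:R / (4 * s)%:R) ^+ p * (11 / 8) ^+ q
  + 1 / (n%:R ^+ 2) * (5 / 4) ^+ (p + q) *
    \sum_(1 <= k < (p + q).+1) (1 / 5) ^+ k *
      \sum_(k1 < k.+1)
        ('C(p, k1) * 'C(q, k - k1))%:R * (rem_r n k1 (k - k1) s)%:R *
        (1 - (rem_r n k1 (k - k1) s)%:R / (s ^ k1 * 2 ^ (k - k1))%:R).

End QQD.

(* Both integral terms of QQD^2 are independent of the design: for every point
   a of [0, 1] the quantitative kernel integrates to 4/3, and each qualitative
   kernel sums to (5s+1)/4 over the s levels.  On design points the levels 1/4
   and 3/4 make both one-dimensional kernels equal to 5/4 (1 + [x = y]/5), so
   expanding the product over subsets of coordinates gives
     K(x_i, x_j) = (5/4)^(p+q) sum_(S1, S2) 5^-(|S1|+|S2|) [x_i, x_j agree on S1, S2].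
   For fixed (S1, S2) the agreeing pairs are the collisions of the projection onto
   N = s^|S1| 2^|S2| patterns, and N squares of naturals summing to n add up to at
   least n^2/N + r (1 - r/N) with r = n mod N.  Summing over the subsets, grouped by
   their sizes, gives LB2. *)
From HB Require Import structures.
From mathcomp Require Import all_boot all_order all_algebra.
From mathcomp Require Import all_classical all_reals all_analysis.
From mathcomp Require Import zify ring lra.
Set Implicit Arguments. Unset Strict Implicit. Unset Printing Implicit Defensive.
Import Order.TTheory GRing.Theory Num.Theory.
Import numFieldNormedType.Exports.
Local Open Scope ring_scope.

Lemma sqrn_ge_chord (a c : nat) : ((2 * a + 1) * c <= c * c + a * a.+1)%N.
Proof.
case: (leqP c a) => [ca | ac].
  have [d ->] : exists d, a = (c + d)%N by exists (a - c)%N; lia.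
  nia.
have [d ->] : exists d, c = (a.+1 + d)%N by exists (c - a.+1)%N; lia.
nia.
Qed.

Lemma sum_sqrn_ge (K : finType) (c : K -> nat) (n : nat) : (\sum_v c v)%N = n ->
  (n %/ #|K| * (n %/ #|K|) * #|K| + 2 * (n %/ #|K|) * (n %% #|K|) + n %% #|K|
     <= \sum_v c v * c v)%N.
Proof.
move=> sum_c; set a := (n %/ #|K|)%N; set r := (n %% #|K|)%N.
have chord : (\sum_v (2 * a + 1) * c v <= \sum_v (c v * c v + a * a.+1))%N.
  by apply: leq_sum => v _; exact: sqrn_ge_chord.
rewrite -big_distrr big_split sum_nat_const /= sum_c in chord.
change #|xpredT| with #|K| in chord.
have := divn_eq n #|K|; rewrite -/a -/r; nia.
Qed.

Lemma sum_pairs_eq_sum_fibre_sqr (I K : finType) (f : I -> K) :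
  (\sum_i \sum_j (f i == f j) = \sum_v #|[set i | f i == v]| * #|[set i | f i == v]|)%N.
Proof.
pose c v := #|[set i | f i == v]|.
transitivity (\sum_i c (f i))%N.
  apply: eq_bigr => i _; rewrite /c -sum1_card [RHS]big_mkcond /=.
  by apply: eq_bigr => j _; rewrite inE eq_sym; case: (_ == _).
rewrite (partition_big f predT) //=; apply: eq_bigr => v _.
rewrite (eq_bigr (fun _ => c v)); last by move=> i /eqP ->.
by rewrite sum_nat_const /c cardsE.
Qed.

Definition rem_defect (R : realFieldType) (n N : nat) : R :=
  (n %% N)%:R * (1 - (n %% N)%:R / N%:R).

Lemma collisions_ge (R : realFieldType) (I K : finType) (f : I -> K) : (0 < #|K|)%N ->
  #|I|%:R ^+ 2 / #|K|%:R + rem_defect R #|I| #|K| <= \sum_i \sum_j (f i == f j)%:R :> R.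
Proof.
move=> K0; pose c v := #|[set i | f i == v]|.
have sum_c : (\sum_v c v)%N = #|I|.
  rewrite -sum1_card (partition_big f predT) //=.
  by apply: eq_bigr => v _; rewrite /c -sum1_card; apply: eq_bigl => i; rewrite inE.
have NR : #|K|%:R != 0 :> R by rewrite pnatr_eq0 -lt0n.
set a := (#|I| %/ #|K|)%N; set r := (#|I| %% #|K|)%N.
have eI : #|I|%:R = a%:R * #|K|%:R + r%:R :> R by rewrite -natrM -natrD -divn_eq.
rewrite (_ : _ + _ = (a * a * #|K| + 2 * a * r + r)%:R); last first.
  by rewrite /rem_defect -/r eI !natrD !natrM; field.
under [X in _ <= X]eq_bigr do rewrite -natr_sum.
by rewrite -natr_sum ler_nat sum_pairs_eq_sum_fibre_sqr sum_sqrn_ge.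
Qed.

Definition restr (I : finType) (T : Type) (S : {set I}) (f : I -> T) :
  {ffun {k | k \in S} -> T} := [ffun k => f (val k)].

Lemma restr_eq (I : finType) (T : eqType) (S : {set I}) (f g : I -> T) :
  (restr S f == restr S g) = [forall k in S, f k == g k].
Proof.
apply/eqP/forall_inP => [fg k kS | fg].
  by move/ffunP: fg => /(_ (exist _ k kS)); rewrite !ffunE => ->.
by apply/ffunP => k; rewrite !ffunE; apply/eqP/fg/(valP k).
Qed.

Lemma card_restr (I T : finType) (S : {set I}) :
  #|{ffun {k | k \in S} -> T}| = (#|T| ^ #|S|)%N.
Proof. by rewrite card_ffun card_sig. Qed.

Section Subsets.
Variable R : comNzRingType.

Lemma prod_add1_subsets (I : finType) (F : I -> R) :
  \prod_k (1 + F k) = \sum_(S : {set I}) \prod_(k in S) F k.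
Proof.
under eq_bigr do rewrite addrC.
by rewrite bigA_distr; apply: eq_bigr => S _; rewrite [RHS]big_mkcond.
Qed.

Lemma sum_exp_card_subsets (I : finType) (c : R) :
  \sum_(S : {set I}) c ^+ #|S| = (1 + c) ^+ #|I|.
Proof.
rewrite -prodr_const prod_add1_subsets.
by apply: eq_bigr => S _; rewrite prodr_const.
Qed.

Lemma prod_nat_indicator (I : finType) (S : {pred I}) (P : pred I) :
  \prod_(k in S) (P k)%:R = [forall k in S, P k]%:R :> R.
Proof.
have [allP | /forall_inPn[k kS /negPf Pk]] := boolP [forall k in S, P k].
  by rewrite big1 // => k kS; move/forall_inP: allP => ->.
by rewrite (bigD1 k) //= Pk mul0r.
Qed.

Lemma prod_affine_indicator (I : finType) (T : eqType) (c d : R) (f g : I -> T) :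
  \prod_k (c * (1 + d * (f k == g k)%:R))
  = c ^+ #|I| * \sum_(S : {set I}) d ^+ #|S| * (restr S f == restr S g)%:R.
Proof.
rewrite big_split /= prodr_const prod_add1_subsets; congr (_ * _).
apply: eq_bigr => S _.
by rewrite big_split /= prodr_const prod_nat_indicator restr_eq.
Qed.

Lemma sum_subsets_card_eq (I J : finType) (k1 k2 : nat) (X : R) :
  \sum_(S1 : {set I}) \sum_(S2 : {set J})
     (if (#|S1| == k1) && (#|S2| == k2) then X else 0)
  = ('C(#|I|, k1) * 'C(#|J|, k2))%:R * X.
Proof.
transitivity (\sum_(S1 : {set I} | #|S1| == k1) \sum_(S2 : {set J} | #|S2| == k2) X).
  rewrite [RHS]big_mkcond; apply: eq_bigr => S1 _.
  case: (#|S1| == k1) => /=; last by rewrite big1.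
  by rewrite [RHS]big_mkcond.
rewrite (eq_bigr (fun _ => X *+ #|[set S2 : {set J} | #|S2| == k2]|)); last first.
  by move=> S1 _; rewrite sumr_const; congr (_ *+ _); apply: eq_card => S2; rewrite inE.
rewrite sumr_const.
have -> : #|[pred S1 : {set I} | #|S1| == k1]| = #|[set S1 : {set I} | #|S1| == k1]|.
  by apply: eq_card => S1; rewrite inE.
by rewrite !card_draws -mulrnA mulr_natl mulnC.
Qed.

Lemma sum_triangle_indicator (m a b : nat) (G : nat -> nat -> R) : (a + b <= m)%N ->
  \sum_(k < m.+1) \sum_(k1 < k.+1)
     (if (a == k1) && (b == (k - k1)%N) then G k1 ((k - k1)%N) else 0) = G a b.
Proof.
move=> abm.
transitivity (\sum_(k < m.+1)
    (if (a < k.+1)%N && (b == (k - a)%N) then G a ((k - a)%N) else 0)).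
  apply: eq_bigr => k _; rewrite -big_mkcond /=.
  rewrite (eq_bigl (fun k1 : 'I_k.+1 => (b == (k - k1)%N) && (k1 == a :> nat))); last first.
    by move=> k1 /=; rewrite andbC [a == _]eq_sym.
  exact: (big_ord1_cond_eq _ (fun k1 => G k1 ((k - k1)%N)) (fun k1 => b == (k - k1)%N)).
rewrite -big_mkcond /= (eq_bigl (fun k : 'I_m.+1 => k == (a + b)%N :> nat)); last first.
  move=> k /=; apply/andP/eqP => [[ak /eqP ->] | ->]; last by rewrite ltnS leq_addr addKn.
  by rewrite subnKC.
by rewrite (big_ord1_eq _ (fun k => G a ((k - a)%N))) ltnS abm addKn.
Qed.

Lemma sum_subsets2_card (I J : finType) (G : nat -> nat -> R) :
  \sum_(S1 : {set I}) \sum_(S2 : {set J}) G #|S1| #|S2|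
  = \sum_(k < (#|I| + #|J|).+1) \sum_(k1 < k.+1)
      ('C(#|I|, k1) * 'C(#|J|, (k - k1)%N))%:R * G k1 ((k - k1)%N).
Proof.
under eq_bigr => S1 _ do under eq_bigr => S2 _ do
  rewrite -(@sum_triangle_indicator (#|I| + #|J|) #|S1| #|S2|) ?leq_add ?max_card //.
under eq_bigr => S1 _ do rewrite exchange_big.
rewrite exchange_big; apply: eq_bigr => k _.
under eq_bigr => S1 _ do rewrite exchange_big.
by rewrite exchange_big; apply: eq_bigr => k1 _; rewrite sum_subsets_card_eq.
Qed.

End Subsets.

Lemma sum_subsets_collision_bound (R : realFieldType) n p q s : (0 < s)%N ->
  \sum_(S1 : {set 'I_p}) \sum_(S2 : {set 'I_q}) (1 / 5) ^+ (#|S1| + #|S2|) *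
    (n%:R ^+ 2 / (s ^ #|S1| * 2 ^ #|S2|)%:R + rem_defect R n (s ^ #|S1| * 2 ^ #|S2|))
  = n%:R ^+ 2 * ((1 + 1 / (5 * s%:R)) ^+ p * (1 + 1 / 10) ^+ q)
    + \sum_(1 <= k < (p + q).+1) (1 / 5) ^+ k *
      \sum_(k1 < k.+1)
        ('C(p, k1) * 'C(q, k - k1))%:R * (rem_r n k1 (k - k1) s)%:R *
        (1 - (rem_r n k1 (k - k1) s)%:R / (s ^ k1 * 2 ^ (k - k1))%:R).
Proof.
move=> s0; have sR : s%:R != 0 :> R by rewrite pnatr_eq0 -lt0n.
under eq_bigr do under eq_bigr do rewrite mulrDr.
under eq_bigr do rewrite big_split /=.
rewrite big_split /=; congr (_ + _).
  have sum_pow m (c : R) : \sum_(S : {set 'I_m}) c ^+ #|S| = (1 + c) ^+ m.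
    by rewrite sum_exp_card_subsets card_ord.
  rewrite -!sum_pow big_distrlr mulr_sumr /=.
  apply: eq_bigr => S1 _; rewrite mulr_sumr; apply: eq_bigr => S2 _.
  rewrite natrM !natrX exprD !mul1r invfM -!exprVn invfM exprMn.
  have -> : (10 : R)^-1 = 5^-1 * 2^-1 by rewrite -invfM -natrM.
  by rewrite exprMn; ring.
pose G a b : R := (1 / 5) ^+ (a + b) * rem_defect R n (s ^ a * 2 ^ b).
rewrite (@sum_subsets2_card R _ _ G) !card_ord big_ord_recl big_add1 big_mkord /=.
rewrite {1}/G big_ord1 /rem_defect expn0 muln1 modn1 mul0r !mulr0 add0r.
apply: eq_bigr => k _; rewrite mulr_sumr; apply: eq_bigr => -[k1 k1_le] _ /=.
rewrite (_ : bump 0 k = k.+1) // in k1_le *.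
by rewrite /G /rem_defect /rem_r subnKC // mulrCA !mulrA.
Qed.

Section KernelIntegrals.
Local Open Scope classical_set_scope.
Variable R : realType.
Notation mu := (@lebesgue_measure R).

Lemma Rintegral_deriv_horner (P : {poly R}) (a b : R) : a <= b ->
  \int[mu]_(x in `[a, b]) (P^`()).[x] = P.[b] - P.[a].
Proof.
rewrite le_eqVlt => /predU1P[<- | ab].
  by rewrite set_itv1 Rintegral_set1 subrr.
rewrite /Rintegral (continuous_FTC2 ab (F := horner P)) //.
- by apply: continuous_subspaceT => x; exact: continuous_horner.
- split; first by move=> x _; exact: derivable_horner.
  + by apply: cvg_at_right_filter; exact: continuous_horner.
  + by apply: cvg_at_left_filter; exact: continuous_horner.
- by move=> x _; rewrite -derivE.
Qed.

Lemma Rintegral01_cst (c : R) : \int[mu]_(x in `[0, 1]) c = c.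
Proof.
by rewrite Rintegral_cst //= lebesgue_measure_itv /= lte_fin ltr01 /= subr0 mulr1.
Qed.

Lemma Kquant_continuous (a : R) : continuous (Kquant a).
Proof.
have -> : Kquant a =
    horner ((3/2)%:P - 'X + 'X^2) \o (@Num.Def.normr R R) \o horner (a%:P - 'X).
  by apply/funext => x /=; rewrite /Kquant !hornerE.
move=> x; apply: continuous_comp; first exact: continuous_horner.
apply: continuous_comp; first exact: norm_continuous.
exact: continuous_horner.
Qed.

Lemma Kquant_integrable (a : R) : mu.-integrable `[0, 1] (EFin \o Kquant a).
Proof.
apply: continuous_compact_integrable; first exact: segment_compact.
by apply: continuous_subspaceT; exact: Kquant_continuous.
Qed.

Lemma KquantC (x y : R) : Kquant x y = Kquant y x.
Proof. by rewrite /Kquant distrC. Qed.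

Lemma Rintegral_Kquant (a : R) : 0 <= a <= 1 ->
  \int[mu]_(x in `[0, 1]) Kquant a x = 4 / 3.
Proof.
move=> /andP[a0 a1].
have split_at_a : \int[mu]_(x in `[0, 1]) Kquant a x =
    \int[mu]_(x in `[0, a]) Kquant a x + \int[mu]_(x in `[a, 1]) Kquant a x.
  have := @Rintegral_itvB R (Kquant a) (BLeft 0) (BRight 1) a (Kquant_integrable a).
  rewrite !bnd_simp => /(_ a0 a1) /eqP; rewrite subr_eq => /eqP ->.
  rewrite addrC Rintegral_itv_obnd_cbnd //.
  by apply: integrableS (Kquant_integrable a) => //; apply: subset_itvr; rewrite bnd_simp.
pose P1 : {poly R} := (3/2 - a + a^+2) *: 'X + ((1 - 2*a)/2) *: 'X^2 + (1/3) *: 'X^3.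
pose P2 : {poly R} := (3/2 + a + a^+2) *: 'X - ((1 + 2*a)/2) *: 'X^2 + (1/3) *: 'X^3.
have P1' x : P1^`().[x] = 3/2 - (a - x) + (a - x)^+2.
  by rewrite /P1 !derivD !derivZ derivX !derivXn !hornerE /=; field.
have P2' x : P2^`().[x] = 3/2 - (x - a) + (x - a)^+2.
  by rewrite /P2 !derivD !derivN !derivZ derivX !derivXn !hornerE /=; field.
rewrite split_at_a.
transitivity (\int[mu]_(x in `[0, a]) P1^`().[x] + \int[mu]_(x in `[a, 1]) P2^`().[x]).
  congr (_ + _); apply: eq_Rintegral => x; rewrite inE /= in_itv /= => /andP[xl xr].
    by rewrite P1' /Kquant ger0_norm ?subr_ge0.
  by rewrite P2' /Kquant distrC ger0_norm ?subr_ge0.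
by rewrite !Rintegral_deriv_horner // /P1 /P2 !hornerE /=; field.
Qed.

Definition in_cube (v : seq R) := all (fun x => 0 <= x <= 1) v.

Lemma in_cube_nth (v : seq R) k : in_cube v -> 0 <= nth 0 v k <= 1.
Proof.
elim: v k => [|x v IH] [|k] /=; rewrite ?lexx ?ler01 //.
- by case/andP.
- by case/andP => _; exact: IH.
Qed.

Lemma cube_int_eq q (f g : seq R -> R) :
  (forall v, in_cube v -> f v = g v) -> cube_int q f = cube_int q g.
Proof.
elim: q f g => [|q IH] f g fg /=; first exact: fg.
apply: eq_Rintegral => x; rewrite inE /= in_itv /= => x01.
by apply: IH => v v01; apply: fg; rewrite /in_cube /= x01.
Qed.

Lemma cube_int_cst q (c : R) : cube_int q (fun _ => c) = c.
Proof.
elim: q => [|q IH] //=.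
by rewrite -[RHS]Rintegral01_cst; apply: eq_Rintegral.
Qed.

Lemma cube_int_prod_Kquant q (a : seq R) (c : R) : in_cube a ->
  cube_int q (fun v => c * \prod_(k < q) Kquant (nth 0 a k) (nth 0 v k)) = c * (4 / 3) ^+ q.
Proof.
elim: q a c => [|q IH] a c a01 /=; first by rewrite big_ord0 !mulr1.
have b01 : in_cube (behead a) by case: a a01 => //= x a /andP[].
transitivity (\int[mu]_(x in `[0, 1]) ((c * (4 / 3) ^+ q) * Kquant (nth 0 a 0) x)).
  apply: eq_Rintegral => x _.
  rewrite -mulrA [(4 / 3) ^+ q * _]mulrC mulrA -(IH _ _ b01).
  congr cube_int; apply/funext => v; rewrite big_ord_recl /= mulrA.
  by congr (_ * _); apply: eq_bigr => k _; rewrite nth_behead.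
rewrite RintegralZl //; last exact: Kquant_integrable.
by rewrite Rintegral_Kquant ?in_cube_nth // exprSr !mulrA.
Qed.

End KernelIntegrals.

Section Discrepancy.
Variable R : realType.

Lemma KqualC s (x y : 'I_s) : Kqual R x y = Kqual R y x.
Proof. by rewrite /Kqual eq_sym. Qed.

Lemma KfullC p q s (t1 z1 : {ffun 'I_p -> 'I_s}) (t2 z2 : seq R) :
  Kfull q t1 t2 z1 z2 = Kfull q z1 z2 t1 t2.
Proof.
by rewrite /Kfull; congr (_ * _); apply: eq_bigr => k _; rewrite (KqualC, KquantC).
Qed.

Lemma sum_Kqual s (t : 'I_s) : \sum_z Kqual R t z = (5 * s + 1)%:R / 4.
Proof.
rewrite (bigD1 t) //= /Kqual eqxx (eq_bigr (fun _ => 5 / 4)); last first.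
  by move=> z /negPf; rewrite eq_sym => ->.
rewrite sumr_const cardC1 card_ord; case: s t => [[] // | s] _ /=.
by rewrite -mulr_natr natrD natrM -natr1; field.
Qed.

Lemma sum_prod_Kqual p s (t1 : {ffun 'I_p -> 'I_s}) :
  \sum_(z1 : {ffun 'I_p -> 'I_s}) \prod_k Kqual R (t1 k) (z1 k) = ((5 * s + 1)%:R / 4) ^+ p.
Proof.
rewrite -(bigA_distr_bigA (fun k z => Kqual R (t1 k) z)).
by rewrite (eq_bigr _ (fun k _ => sum_Kqual (t1 k))) prodr_const card_ord.
Qed.

Definition Kmean p q s : R := ((5 * s + 1)%:R / (4 * s)%:R) ^+ p * (4 / 3) ^+ q.

Lemma chi_int_eq p q s (f g : {ffun 'I_p -> 'I_s} -> seq R -> R) :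
  (forall t1 t2, in_cube t2 -> f t1 t2 = g t1 t2) -> chi_int q f = chi_int q g.
Proof.
by move=> fg; rewrite /chi_int; congr (_ * _); apply: eq_bigr => t1 _; apply/cube_int_eq/fg.
Qed.

Lemma chi_int_cst p q s (c : R) : (0 < s)%N ->
  chi_int q (fun (_ : {ffun 'I_p -> 'I_s}) _ => c) = c.
Proof.
move=> s0; rewrite /chi_int; under eq_bigr do rewrite cube_int_cst.
rewrite sumr_const card_ffun !card_ord -[c *+ _]mulr_natl natrX mulKf //.
by rewrite expf_neq0 // pnatr_eq0 -lt0n.
Qed.

Lemma chi_int_Kfull p q s (t1 : {ffun 'I_p -> 'I_s}) (t2 : seq R) : (0 < s)%N -> in_cube t2 ->
  chi_int q (fun z1 z2 => Kfull q t1 t2 z1 z2) = Kmean p q s.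
Proof.
move=> s0 t01; rewrite /chi_int /Kfull.
under eq_bigr do rewrite cube_int_prod_Kquant //.
rewrite -mulr_suml sum_prod_Kqual /Kmean mulrA -exprVn -exprMn natrM.
have sR : s%:R != 0 :> R by rewrite pnatr_eq0 -lt0n.
by congr (_ ^+ _ * _); field.
Qed.

Lemma Kqual_indicator s (x y : 'I_s) : Kqual R x y = 5 / 4 * (1 + 1 / 5 * (x == y)%:R).
Proof. by rewrite /Kqual; case: (x == y) => /=; field. Qed.

Lemma Kquant_level_indicator (x y : 'I_2) :
  Kquant (quant_level R x) (quant_level R y) = 5 / 4 * (1 + 1 / 5 * (x == y)%:R).
Proof.
have dist : `|quant_level R x - quant_level R y| = (x != y)%:R / 2.
{ case: x y => [[|[|//]] ?] [[|[|//]] ?]; rewrite /quant_level /=.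
  - by rewrite subrr normr0 mul0r.
  - by rewrite ler0_norm; [field | lra].
  - by rewrite ger0_norm; [field | lra].
  - by rewrite subrr normr0 mul0r. }
by rewrite /Kquant dist; case: (x == y) => /=; field.
Qed.

Lemma in_cube_row_quant n q (D2 : 'M['I_2]_(n, q)) i : in_cube (row_quant R D2 i).
Proof.
rewrite /in_cube /row_quant all_map; apply/allP => k _ /=.
by rewrite /quant_level; case: (D2 i k) => [[|[|//]] ?] /=; apply/andP; split; lra.
Qed.

Lemma nth_row_quant n q (D2 : 'M['I_2]_(n, q)) i (k : 'I_q) :
  nth 0 (row_quant R D2 i) k = quant_level R (D2 i k).
Proof. by rewrite /row_quant (nth_map k) ?size_enum_ord // nth_ord_enum. Qed.

Definition design_key n p q s (D1 : 'M['I_s]_(n, p)) (D2 : 'M['I_2]_(n, q))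
    (S1 : {set 'I_p}) (S2 : {set 'I_q}) (i : 'I_n) :=
  (restr S1 (D1 i), restr S2 (D2 i)).

Lemma card_design_key s (I J : finType) (S1 : {set I}) (S2 : {set J}) :
  #|{: {ffun {k | k \in S1} -> 'I_s} * {ffun {k | k \in S2} -> 'I_2}}|
  = (s ^ #|S1| * 2 ^ #|S2|)%N.
Proof. by rewrite card_prod !card_restr !card_ord. Qed.

Lemma Kfull_rows n p q s (D1 : 'M['I_s]_(n, p)) (D2 : 'M['I_2]_(n, q)) i j :
  Kfull q (row_qual D1 i) (row_quant R D2 i) (row_qual D1 j) (row_quant R D2 j)
  = (5 / 4) ^+ (p + q) * \sum_(S1 : {set 'I_p}) \sum_(S2 : {set 'I_q})
      (1 / 5) ^+ (#|S1| + #|S2|) * (design_key D1 D2 S1 S2 i == design_key D1 D2 S1 S2 j)%:R.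
Proof.
rewrite /Kfull.
under eq_bigr do rewrite !ffunE Kqual_indicator.
under [X in _ * X]eq_bigr do rewrite !nth_row_quant Kquant_level_indicator.
rewrite !prod_affine_indicator !card_ord exprD mulrACA big_distrlr /=; congr (_ * _).
apply: eq_bigr => S1 _; apply: eq_bigr => S2 _.
by rewrite xpair_eqE -mulnb natrM exprD mulrACA.
Qed.

Lemma sum_Kfull_rows_ge_subsets n p q s (D1 : 'M['I_s]_(n, p)) (D2 : 'M['I_2]_(n, q)) :
  (0 < s)%N ->
  (5 / 4) ^+ (p + q) * \sum_(S1 : {set 'I_p}) \sum_(S2 : {set 'I_q})
    (1 / 5) ^+ (#|S1| + #|S2|) *
    (n%:R ^+ 2 / (s ^ #|S1| * 2 ^ #|S2|)%:R + rem_defect R n (s ^ #|S1| * 2 ^ #|S2|))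
  <= \sum_i \sum_j
       Kfull q (row_qual D1 i) (row_quant R D2 i) (row_qual D1 j) (row_quant R D2 j).
Proof.
move=> s0.
under [X in _ <= X]eq_bigr do under eq_bigr do rewrite Kfull_rows.
under [X in _ <= X]eq_bigr do rewrite -mulr_sumr.
rewrite -mulr_sumr ler_wpM2l ?exprn_ge0 //.
under [X in _ <= X]eq_bigr do rewrite exchange_big.
rewrite [X in _ <= X]exchange_big; apply: ler_sum => S1 _.
under [X in _ <= X]eq_bigr do rewrite exchange_big.
rewrite [X in _ <= X]exchange_big; apply: ler_sum => S2 _.
set w := (1 / 5) ^+ _; set key := design_key D1 D2 S1 S2.
rewrite (_ : \sum_i \sum_j _ = w * \sum_i \sum_j (key i == key j)%:R); last first.
  by rewrite mulr_sumr; apply: eq_bigr => i _; rewrite mulr_sumr.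
rewrite ler_wpM2l ?exprn_ge0 // -[n in n%:R ^+ 2]card_ord -[n in rem_defect _ n]card_ord.
rewrite -(card_design_key s S1 S2); apply: collisions_ge.
by rewrite card_design_key muln_gt0 !expn_gt0 s0.
Qed.

Lemma sum_Kfull_rows_ge n p q s (D1 : 'M['I_s]_(n, p)) (D2 : 'M['I_2]_(n, q)) : (0 < s)%N ->
  n%:R ^+ 2 * (((5 * s + 1)%:R / (4 * s)%:R) ^+ p * (11 / 8) ^+ q)
  + (5 / 4) ^+ (p + q) * \sum_(1 <= k < (p + q).+1) (1 / 5) ^+ k *
      \sum_(k1 < k.+1)
        ('C(p, k1) * 'C(q, k - k1))%:R * (rem_r n k1 (k - k1) s)%:R *
        (1 - (rem_r n k1 (k - k1) s)%:R / (s ^ k1 * 2 ^ (k - k1))%:R)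
  <= \sum_i \sum_j
       Kfull q (row_qual D1 i) (row_quant R D2 i) (row_qual D1 j) (row_quant R D2 j).
Proof.
move=> s0; apply: le_trans (sum_Kfull_rows_ge_subsets D1 D2 s0).
have sR : s%:R != 0 :> R by rewrite pnatr_eq0 -lt0n.
have factor : ((5 * s + 1)%:R / (4 * s)%:R) ^+ p * (11 / 8) ^+ q
    = (5 / 4) ^+ (p + q) * ((1 + 1 / (5 * s%:R)) ^+ p * (1 + 1 / 10) ^+ q) :> R.
  by rewrite exprD mulrACA -!exprMn natrD !natrM; congr (_ ^+ _ * _ ^+ _); field.
by rewrite sum_subsets_collision_bound // mulrDr [_ * (n%:R ^+ 2 * _)]mulrCA -factor.
Qed.

Lemma chi_int_chi_int_Kfull p q s : (0 < s)%N ->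
  @chi_int R p q s (fun t1 t2 => chi_int q (Kfull q t1 t2)) = Kmean p q s.
Proof.
move=> s0; rewrite -(chi_int_cst p q (Kmean p q s) s0).
by apply: chi_int_eq => t1 t2; exact: chi_int_Kfull.
Qed.

Lemma chi_int_Kfull_row n p q s (D1 : 'M['I_s]_(n, p)) (D2 : 'M['I_2]_(n, q)) i : (0 < s)%N ->
  chi_int q (fun t1 t2 => Kfull q t1 t2 (row_qual D1 i) (row_quant R D2 i)) = Kmean p q s.
Proof.
move=> s0; rewrite -(chi_int_Kfull q (row_qual D1 i) s0 (in_cube_row_quant D2 i)).
by apply: chi_int_eq => t1 t2 _; rewrite KfullC.
Qed.

End Discrepancy.

Unset Implicit Arguments.

Theorem theorem5 (R : realType) (n p q s : nat) (hn : (0 < n)%N) (hs : (2 <= s)%N)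
  (D1 : 'M['I_s]_(n, p)) (D2 : 'M['I_2]_(n, q)) :
  balanced_qual D1 -> balanced_quant D2 ->
  LB2 R n p q s <= QQD2 R D1 D2.
Proof.
move=> _ _; have s0 : (0 < s)%N := ltnW hs.
have nR : n%:R != 0 :> R by rewrite pnatr_eq0 -lt0n.
have pair_term := sum_Kfull_rows_ge R D1 D2 s0.
rewrite /QQD2 chi_int_chi_int_Kfull // (eq_bigr _ (fun i _ => chi_int_Kfull_row R D1 D2 i s0)).
rewrite sumr_const card_ord /LB2 mulNr /Kmean.
set V := _ ^+ p * (4 / 3) ^+ q; set W := _ ^+ p * (11 / 8) ^+ q in pair_term *.
set c := (5 / 4) ^+ _ in pair_term *; set SF := \sum_(1 <= k < _) _ in pair_term *.
set Pairs := \sum_i _ in pair_term *.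
have scaled : W + 1 / n%:R ^+ 2 * c * SF <= 1 / n%:R ^+ 2 * Pairs.
  rewrite (_ : W + _ = 1 / n%:R ^+ 2 * (n%:R ^+ 2 * W + c * SF)); last by field.
  by rewrite ler_wpM2l // divr_ge0 ?exprn_ge0.
have cross : 2 / n%:R * (V *+ n) = 2 * V by rewrite -mulr_natr; field.
by rewrite cross; lra.
Qed.
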